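(* Fix a block $i\in\{1,\dots,N\}$, a battery state $\epsilon$ and an H-channel state $\gamma_H$. If $\gamma_G^-\le\gamma_G^+$ are G-channel states and the action $\alpha=1$ is optimal in block $i$ at state $\langle\epsilon,\gamma_G^+,\gamma_H\rangle$, then $\alpha=1$ is optimal in block $i$ at state $\langle\epsilon,\gamma_G^-,\gamma_H\rangle$. Equivalently, the optimal policy is monotone in $\gamma_G$: there is a threshold $\Gamma_{G,i}(\epsilon,\gamma_H)$ such that the EH-BS is assigned ($\alpha=1$) only when $\gamma_G\le\Gamma_{G,i}(\epsilon,\gamma_H)$.
   Context: Finite-horizon MDP with $N$ blocks of length $\tau>0$. Parameters: $B_m>0$, positive integers $M,K$; channel levels $0<H_1<\dots<H_K$; $R,W,\sigma^2,g_0,\theta,d_G,d_H>0$; $p_G^{\max},p_H^{\max}>0$; weights $w_G,w_D>0$; $E_{H}$ a random variable with density $f_{E_H}$ on $[0,E_m]$. A state is $s=\langle\epsilon,\gamma_G,\gamma_H\rangle$ with $\epsilon\in\{(2m-1)B_m/(2M): m=1,\dots,M\}$ and $\gamma_G,\gamma_H\in\{H_1,\dots,H_K\}$. Let $p^{inv}_j(s)=(2^{R/(W\tau)}-1)\sigma^2(g_0 d_j^{-\theta}\gamma_j)^{-1}$ for $j\in\{G,H\}$, $\kappa=\min\{p_G^{\max},w_D(w_G\tau)^{-1}\}$, and $c(s)=w_D$ if $p^{inv}_G(s)>\kappa$, $c(s)=w_G p^{inv}_G(s)\tau$ otherwise. The allowable actions are $\mathcal{A}_s=\{0\}$ if $p^{inv}_H(s)>\min\{\epsilon/\tau,p_H^{\max}\}$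 and $\mathcal{A}_s=\{0,1\}$ otherwise; the cost is $c(s,\alpha)=(1-\alpha)c(s)$. Transitions: given $s$ and $\alpha$, the next channel states $\gamma_G',\gamma_H'$ are independent, each uniform on $\{H_1,\dots,H_K\}$, independent of the next energy state $\epsilon'=Q(\epsilon-\alpha p^{inv}_H(s)\tau+E_H)$, where $Q(\varepsilon)=\big(2\min\{\lfloor M\min\{\varepsilon,B_m\}/B_m\rfloor+1,M\}-1\big)B_m/(2M)$; denote the resulting transition probability $p(s'|s,\alpha)$. Optimal cost-to-go functions: $u_N^*(s)=\min_{\alpha\in\mathcal{A}_s}c(s,\alpha)$ and, for $i<N$, $u_i^*(s)=\min_{\alpha\in\mathcal{A}_s}\{c(s,\alpha)+\sum_{s'}p(s'|s,\alpha)u_{i+1}^*(s')\}$. Action $\alpha$ is optimal in block $i$ at state $s$ if $\alpha\in\mathcal{A}_s$ and it attains the minimum in the defining equation of $u_i^*(s)$. *)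

From HB Require Import structures.
From mathcomp Require Import all_boot all_order all_algebra.
From mathcomp Require Import all_classical all_reals all_analysis.
Set Implicit Arguments. Unset Strict Implicit. Unset Printing Implicit Defensive.
Import Order.TTheory GRing.Theory Num.Theory.
Local Open Scope ring_scope.
Local Open Scope classical_set_scope.

Section EHMDP.
Variable R : realType.

(* Channel levels H_1 < ... < H_K are
   indexed by 'I_K (0-based); battery levels by 'I_M, level m : 'I_M being
   (2m+1) B_m / (2M)  (i.e. (2m'-1)B_m/(2M) with m' = m+1 in 1..M). *)
Record params := Params {
  tau : R; Bm : R; M : nat; K : nat; Hlev : 'I_K -> R;
  Rr : R; W : R; sigma2 : R; g0 : R; theta : R; dG : R; dH : R;
  pGmax : R; pHmax : R; wG : R; wD : R; Em : R;
  fE : R -> R;                       (* density of E_H *)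
  muE : probability R R
}.
Arguments Hlev : clear implicits.

Record valid (P : params) : Prop := Valid {
  tau_gt0 : 0 < tau P;
  Bm_gt0 : 0 < Bm P;
  M_gt0 : (0 < M P)%N;
  K_gt0 : (0 < K P)%N;
  Hlev_gt0 : forall j, 0 < Hlev P j;
  Hlev_incr : forall j j' : 'I_(K P), (j < j')%N -> Hlev P j < Hlev P j';
  Rr_gt0 : 0 < Rr P; W_gt0 : 0 < W P; sigma2_gt0 : 0 < sigma2 P;
  g0_gt0 : 0 < g0 P; theta_gt0 : 0 < theta P;
  dG_gt0 : 0 < dG P; dH_gt0 : 0 < dH P;
  pGmax_gt0 : 0 < pGmax P; pHmax_gt0 : 0 < pHmax P;
  wG_gt0 : 0 < wG P; wD_gt0 : 0 < wD P;
  Em_gt0 : 0 < Em P;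
  fE_ge0 : forall x, 0 <= fE P x;
  fE_supp : forall x, (x < 0 \/ Em P < x) -> fE P x = 0;
  fE_meas : measurable_fun setT (fE P);
  muE_density : forall A : set R, measurable A ->
      muE P A = (\int[lebesgue_measure]_(x in A) (fE P x)%:E)%E
}.

Variable P : params.

(* States <epsilon, gamma_G, gamma_H>, as indices. *)
Definition state := ('I_(M P) * 'I_(K P) * 'I_(K P))%type.

Definition eps_of (m : 'I_(M P)) : R :=
  ((2 * m + 1)%N%:R * Bm P) / (2 * (M P)%:R).

Definition epsv (s : state) : R := eps_of s.1.1.
Definition gGv (s : state) : R := Hlev P s.1.2.
Definition gHv (s : state) : R := Hlev P s.2.

Definition pinv (d gam : R) : R :=
  (powR 2 (Rr P / (W P * tau P)) - 1) * sigma2 P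
  / (g0 P * powR d (- theta P) * gam).

Definition pinvG (s : state) : R := pinv (dG P) (gGv s).
Definition pinvH (s : state) : R := pinv (dH P) (gHv s).

Definition kappa : R := Num.min (pGmax P) (wD P / (wG P * tau P)).

Definition cost0 (s : state) : R :=
  if pinvG s > kappa then wD P else wG P * pinvG s * tau P.

(* actions: false = 0, true = 1 *)
Definition allowed1 (s : state) : bool :=
  ~~ (pinvH s > Num.min (epsv s / tau P) (pHmax P)).

Definition allowed (s : state) (a : bool) : bool := ~~ a || allowed1 s.

Definition cost (s : state) (a : bool) : R := if a then 0 else cost0 s.

Definition Q (x : R) : R :=
  let k : int := Order.min (Num.floor ((M P)%:R * Num.min x (Bm P) / Bm P) + 1)
                           ((M P)%:Z) in
  (2 * k - 1)%:~R * Bm P / (2 * (M P)%:R).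

Definition trans (s : state) (a : bool) (s' : state) : R :=
  ((K P)%:R ^-1) * ((K P)%:R ^-1) *
  fine (muE P [set e | Q (epsv s - (if a then pinvH s * tau P else 0) + e)
                         = epsv s']).

Definition minA (s : state) (g : bool -> R) : R :=
  if allowed1 s then Num.min (g false) (g true) else g false.

(* V k s = u^*_{N-k}(s): optimal cost-to-go with k blocks remaining after
   the current one. *)
Fixpoint V (k : nat) (s : state) : R :=
  match k with
  | 0 => minA s (cost s)
  | k'.+1 => minA s (fun a => cost s a + \sum_(s' : state) trans s a s' * V k' s')
  end.

(* u^*_i for horizon N (meaningful for 1 <= i <= N) *)
Definition ustar (N i : nat) (s : state) : R := V (N - i) s.

Definition qval (N i : nat) (s : state) (a : bool) : R :=
  if (i < N)%N then cost s a + \sum_(s' : state) trans s a s' * ustar N i.+1 s'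
  else cost s a.

Definition optimal (N i : nat) (s : state) (a : bool) : Prop :=
  allowed s a /\ qval N i s a = ustar N i s.

End EHMDP.
Arguments Hlev {R} p _.
Arguments optimal {R} P N i s a.

From Pilot Require Import Defs.
From mathcomp Require Import all_boot all_order all_algebra.
From mathcomp Require Import all_classical all_reals all_analysis.
Set Implicit Arguments. Unset Strict Implicit.
Import Order.TTheory GRing.Theory Num.Theory.
Local Open Scope ring_scope.

(** The G-channel state enters the MDP only through the cost [c(s)] of not
    assigning the EH-BS: the allowable actions, the transition law and the
    cost of [alpha = 1] depend on [epsilon] and [gamma_H] alone.  Since the
    required transmit power [p^inv_G] decreases in [gamma_G], so does [c(s)];
    lowering [gamma_G] therefore leaves the value of [alpha = 1] unchanged and
    can only make [alpha = 0] more expensive. *)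

Section Monotonicity.
Variables (R : realType) (P : params R).
Hypothesis HP : valid P.

Lemma ustar_minA_qval (N i : nat) (s : state P) :
  ustar N i s = Defs.minA s (qval N i s).
Proof.
rewrite /ustar /qval; case: ltnP => hi; first by rewrite -subnSK.
by have -> : (N - i = 0)%N by apply/eqP; rewrite subn_eq0.
Qed.

Lemma optimal_trueP (N i : nat) (s : state P) :
  optimal P N i s true <-> allowed1 s /\ qval N i s true <= qval N i s false.
Proof.
rewrite /optimal /allowed /= ustar_minA_qval /Defs.minA.
split=> [[al hq] | [al hle]]; rewrite al.
- by split=> //; move: hq; rewrite al => ->; rewrite ge_min lexx.
- by split=> //; apply/esym/min_idPr.
Qed.

Lemma pinv_antitone (d g1 g2 : R) :
  0 < d -> 0 < g1 -> g1 <= g2 -> Defs.pinv P d g2 <= Defs.pinv P d g1.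
Proof.
move=> d_gt0 g1_gt0 g12; rewrite /Defs.pinv; apply: ler_wpM2l.
  apply: mulr_ge0; last exact: ltW (sigma2_gt0 HP).
  rewrite subr_ge0 -{1}(powRr0 2); apply: ler_powR; first by rewrite ler1n.
  apply: divr_ge0; first exact: ltW (Rr_gt0 HP).
  exact: ltW (mulr_gt0 (W_gt0 HP) (tau_gt0 HP)).
have gd_gt0 : 0 < g0 P * powR d (- theta P) by rewrite mulr_gt0 ?(g0_gt0 HP) ?powR_gt0.
rewrite lef_pV2 ?posrE ?(mulr_gt0 gd_gt0) ?(lt_le_trans g1_gt0 g12) //.
by rewrite ler_pM2l.
Qed.

Lemma cost0_le (s s' : state P) : pinvG s <= pinvG s' -> cost0 s <= cost0 s'.
Proof.
move=> hp; have wt_gt0 : 0 < wG P * tau P by rewrite mulr_gt0 ?(wG_gt0 HP) ?(tau_gt0 HP).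
have kappa_le : kappa P <= wD P / (wG P * tau P) by rewrite /kappa ge_min lexx orbT.
rewrite /cost0; case: ltP => hs; case: ltP => hs' //.
- by move: (lt_le_trans hs (le_trans hp hs')); rewrite ltxx.
- have := le_trans hs kappa_le; rewrite ler_pdivlMr // => h.
  by rewrite (mulrC (wG P)) -mulrA.
- by rewrite ler_pM2r ?(tau_gt0 HP) // ler_pM2l ?(wG_gt0 HP).
Qed.

Lemma cost0_antitone_gG (m : 'I_(M P)) (jH j j' : 'I_(K P)) :
  Hlev P j <= Hlev P j' -> cost0 (m, j', jH) <= cost0 (m, j, jH).
Proof.
move=> hj; apply: cost0_le; apply: pinv_antitone hj.
- exact: dG_gt0 HP.
- exact: Hlev_gt0 HP j.
Qed.

(** Holds by conversion: [trans] and [cost _ true] never inspect the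
    G-channel component. *)
Lemma qval_true_gG (N i : nat) (m : 'I_(M P)) (jH j j' : 'I_(K P)) :
  qval N i (m, j, jH) true = qval N i (m, j', jH) true.
Proof. by []. Qed.

Lemma qval_false_antitone_gG (N i : nat) (m : 'I_(M P)) (jH j j' : 'I_(K P)) :
  Hlev P j <= Hlev P j' -> qval N i (m, j', jH) false <= qval N i (m, j, jH) false.
Proof.
move=> hj; rewrite /qval /cost /=.
by case: ifP => _; rewrite ?lerD2r cost0_antitone_gG.
Qed.

End Monotonicity.

Theorem proposition2 (R : realType) (P : params R) (HP : valid P)
  (N i : nat) (hi : (1 <= i <= N)%N)
  (m : 'I_(M P)) (jH jminus jplus : 'I_(K P)) :
  Hlev P jminus <= Hlev P jplus ->
  optimal P N i (m, jplus, jH) true ->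
  optimal P N i (m, jminus, jH) true.
Proof.
move=> hle /optimal_trueP [allowed_plus opt_plus]; apply/optimal_trueP; split.
  exact: allowed_plus.
rewrite (qval_true_gG _ _ _ _ _ jplus).
exact: le_trans opt_plus (qval_false_antitone_gG HP N i m jH hle).
Qed.
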